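(* For every Borel subset $A$ of $\mathbb N^{\mathbb N}$ there exist $g\in\mathbb N^{\mathbb N}$ and $f\in\mathbf{Stp}$ with $A=[\![g]\!]^{\mathcal B}_f$; that is, the map $\mathbb N^{\mathbb N}\times\mathbf{Stp}\to\mathcal B$, $(g,f)\mapsto[\![g]\!]^{\mathcal B}_f$, is surjective onto the family $\mathcal B$ of Borel subsets of $\mathbb N^{\mathbb N}$.
   Context: $\mathbb N=\{1,2,\dots\}$, $\mathbb N^{\mathbb N}$ with the product of discrete topologies, $\mathcal B$ its Borel sets. $B^m_n=\{f: f(n)=m\}$. Fix any bijection $\langle\cdot,\cdot\rangle:\mathbb N\times\mathbb N\to\mathbb N\setminus\{1\}$, and for a finite tuple put $\langle\,\rangle=1$ and $\langle a_1a_2\cdots a_n\rangle=\langle a_1,\langle a_2\cdots a_n\rangle\rangle$, a bijection from finite tuples onto $\mathbb N$. For $k\in\mathbb N$: $[\![k]\!]^{\mathcal S'}=\mathbb N^{\mathbb N}\setminus B^m_n$ if $k=\langle 1mn\rangle$, $=B^m_n$ if $k=\langle 2mn\rangle$, $=\emptyset$ otherwise; if $k=\langle a_1\cdots a_K\rangle$ then $[\![k]\!]^{\mathcal S'_\cap}=\bigcap_{i\le K}[\![a_i]\!]^{\mathcal S'}$ (empty intersection $=\mathbb N^{\mathbb N}$) and $[\![k]\!]^{\mathcal A}=\bigcup_{i\le K}[\![a_i]\!]^{\mathcal S'_\cap}$ (empty union $=\emptyset$). For $f\in\mathbb N^{\mathbb N}$, $n\in\mathbb N$ let $f^{[n]}(m)=f(\langle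 n,m\rangle)$. The set $\mathbf{Stp}\subseteq\mathbb N^{\mathbb N}$ of stumps is defined inductively: if $f(1)\ne1$ then $f\in\mathbf{Stp}$; if $f(1)=1$ and $f^{[n]}\in\mathbf{Stp}$ for all $n$ then $f\in\mathbf{Stp}$. For $f\in\mathbf{Stp}$ and $g\in\mathbb N^{\mathbb N}$ define recursively: if $f(1)\neq1$, $[\![g]\!]^\Pi_f=\bigcap_{n\ge2}[\![g(n)]\!]^{\mathcal A}$ and $[\![g]\!]^\Sigma_f=\bigcup_{n\ge2}[\![g(n)]\!]^{\mathcal A}$; if $f(1)=1$, $[\![g]\!]^\Pi_f=\bigcap_{n}[\![g^{[n]}]\!]^\Sigma_{f^{[n]}}$ and $[\![g]\!]^\Sigma_f=\bigcup_{n}[\![g^{[n]}]\!]^\Pi_{f^{[n]}}$. Finally $[\![g]\!]^{\mathcal B}_f=[\![g]\!]^\Pi_f$ if $g(1)=37$ and $[\![g]\!]^{\mathcal B}_f=[\![g]\!]^\Sigma_f$ if $g(1)\neq37$. *)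

(* N = {1,2,...} is represented by Stdlib's [positive]
   (xH = 1), so Baire space N^N is [positive -> positive]. *)
From Stdlib Require Import PArith List.
Import ListNotations.
Open Scope positive_scope.

Definition baire := positive -> positive.
Definition bset := baire -> Prop.

(* Product of discrete topologies: U is open iff every point of U has a
   basic neighbourhood (fixing finitely many coordinates) inside U. *)
Definition baire_open (U : bset) : Prop :=
  forall f, U f -> exists l : list positive,
    forall g, (forall n, In n l -> g n = f n) -> U g.

Inductive borel : bset -> Prop :=
| borel_open : forall U, baire_open U -> borel U
| borel_compl : forall A, borel A -> borel (fun x => ~ A x)
| borel_union : forall A : nat -> bset, (forall i, borel (A i)) ->
    borel (fun x => exists i, A i x).

Definition Bmn (m n : positive) : bset := fun f => f n = m.

Section Coding.
(* [pair] is the fixed bijection N x N -> N \ {1}. *)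
Variable pair : positive -> positive -> positive.

Fixpoint tup (l : list positive) : positive :=
  match l with
  | [] => 1
  | a :: l' => pair a (tup l')
  end.

Definition semS (k : positive) : bset := fun x =>
  (exists m n, k = tup [1; m; n] /\ ~ Bmn m n x) \/
  (exists m n, k = tup [2; m; n] /\ Bmn m n x).

(* [[k]]^{S'_cap}, k = <a1 ... aK> (the tuple is unique, tup being a
   bijection when pair is one) *)
Definition semScap (k : positive) : bset := fun x =>
  exists l, k = tup l /\ forall a, In a l -> semS a x.

Definition semA (k : positive) : bset := fun x =>
  exists l, k = tup l /\ exists a, In a l /\ semScap a x.

Definition sect (f : baire) (n : positive) : baire := fun m => f (pair n m).

(* Stumps, with the inductive derivation kept as data (a well-founded
   tree) so that the recursive definitions of [[.]]^Pi, [[.]]^Sigma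
   can be made by structural recursion. *)
Inductive stump : baire -> Type :=
| stump_leaf : forall f, f 1 <> 1 -> stump f
| stump_node : forall f, f 1 = 1 -> (forall n, stump (sect f n)) -> stump f.

Definition Stp (f : baire) : Prop := inhabited (stump f).

(* returns ([[g]]^Pi_f, [[g]]^Sigma_f) *)
Fixpoint semPS (f : baire) (p : stump f) (g : baire) : bset * bset :=
  match p with
  | stump_leaf _ _ =>
      (fun x => forall n, n <> 1 -> semA (g n) x,
       fun x => exists n, n <> 1 /\ semA (g n) x)
  | stump_node _ _ c =>
      (fun x => forall n, snd (semPS _ (c n) (sect g n)) x,
       fun x => exists n, fst (semPS _ (c n) (sect g n)) x)
  end.

Definition semB (f : baire) (p : stump f) (g : baire) : bset :=
  if Pos.eqb (g 1) 37 then fst (semPS f p g) else snd (semPS f p g).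

End Coding.

(* Every Borel set is obtained from the open sets by countably many
   complements and countable unions, so it suffices to show that the sets
   [[g]]^Pi_f and [[g]]^Sigma_f contain the opens and are closed under both
   operations.  Countably many codes are glued into one along the pairing
   function: a stump with f(1) = 1 whose sections are the given stumps.
   Complements are handled by induction on the stump, De Morgan swapping
   Pi and Sigma; at the leaves the complement of a finite union of finite
   intersections of the clopen sets B^m_n is a finite intersection of sets
   of the same kind. *)

From Pilot Require Import Defs.
From Stdlib Require Import PArith List ClassicalEpsilon FunctionalExtensionality.
Import ListNotations.
Open Scope positive_scope.

Local Notation "S ≡ T" := (forall x : baire, S x <-> T x) (at level 70).

Lemma ex_ne1_iff (P : positive -> Prop) :
  (exists n, n <> 1 /\ P n) <-> exists n, P (Pos.succ n).
Proof.
  split.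
  - intros [n [n_ne1 Pn]]; exists (Pos.pred n); rewrite Pos.succ_pred; auto.
  - intros [n Pn]; exists (Pos.succ n); split; auto using Pos.succ_not_1.
Qed.

Lemma all_ne1_iff (P : positive -> Prop) :
  (forall n, n <> 1 -> P n) <-> forall n, P (Pos.succ n).
Proof.
  split.
  - intros h n; apply h, Pos.succ_not_1.
  - intros h n n_ne1; rewrite <- (Pos.succ_pred n n_ne1); apply h.
Qed.

Lemma ex_nat_iff_ex_pos (P : nat -> Prop) :
  (exists i, P i) <-> exists n, P (Nat.pred (Pos.to_nat n)).
Proof.
  split.
  - intros [i Pi]; exists (Pos.of_succ_nat i); rewrite SuccNat2Pos.id_succ; exact Pi.
  - intros [n Pn]; eauto.
Qed.

Section Representation.

Variable pair : positive -> positive -> positive.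
Hypothesis pair_ne1 : forall a b, pair a b <> 1.
Hypothesis pair_inj : forall a b c d, pair a b = pair c d -> a = c /\ b = d.

Local Notation tup := (Defs.tup pair).
Local Notation semS := (Defs.semS pair).
Local Notation semScap := (Defs.semScap pair).
Local Notation semA := (Defs.semA pair).
Local Notation stump := (Defs.stump pair).
Local Notation semPS := (Defs.semPS pair).

Lemma tup_inj l1 l2 : tup l1 = tup l2 -> l1 = l2.
Proof.
  revert l2; induction l1 as [|a l1 IH]; intros [|b l2] e; simpl in e.
  - reflexivity.
  - now destruct (pair_ne1 b (tup l2)).
  - now destruct (pair_ne1 a (tup l1)).
  - apply pair_inj in e as [-> e]; now rewrite (IH l2 e).
Qed.

Lemma semS_neq m n x : semS (tup [1; m; n]) x <-> x n <> m.
Proof.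
  split.
  - intros [[m' [n' [e h]]] | [m' [n' [e h]]]];
      apply tup_inj in e; inversion e; subst; easy.
  - intro h; left; eauto.
Qed.

Lemma semS_eq m n x : semS (tup [2; m; n]) x <-> x n = m.
Proof.
  split.
  - intros [[m' [n' [e h]]] | [m' [n' [e h]]]];
      apply tup_inj in e; inversion e; subst; easy.
  - intro h; right; eauto.
Qed.

Lemma semS_cases a :
  (exists m n, a = tup [1; m; n]) \/ (exists m n, a = tup [2; m; n]) \/
  forall x, ~ semS a x.
Proof.
  destruct (classic (exists m n, a = tup [1; m; n])) as [h1 | h1]; [now left|].
  destruct (classic (exists m n, a = tup [2; m; n])) as [h2 | h2]; [now right; left|].
  right; right; intros x [[m [n [e _]]] | [m [n [e _]]]]; eauto.
Qed.

Lemma semScap_tup l x : semScap (tup l) x <-> forall a, In a l -> semS a x.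
Proof.
  split.
  - intros [l' [e h]]; now apply tup_inj in e as ->.
  - intro h; exists l; auto.
Qed.

Lemma semA_tup l x : semA (tup l) x <-> exists a, In a l /\ semScap a x.
Proof.
  split.
  - intros [l' [e h]]; now apply tup_inj in e as ->.
  - intro h; exists l; auto.
Qed.

Lemma semScap_single a : semScap (tup [a]) ≡ semS a.
Proof.
  intro x; rewrite semScap_tup; split.
  - intro h; apply h; now left.
  - now intros h b [<- | []].
Qed.

Lemma semA_single k : semA (tup [k]) ≡ semScap k.
Proof.
  intro x; rewrite semA_tup; split.
  - now intros [a [[<- | []] h]].
  - intro h; exists k; split; [left|]; auto.
Qed.

Lemma semScap_nbhd (x : baire) l :
  semScap (tup (map (fun i => tup [2; x i; i]) l)) ≡ fun y => forall i, In i l -> y i = x i.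
Proof.
  intro y; rewrite semScap_tup; split.
  - intros h i i_l; apply semS_eq, h, (in_map (fun i => tup [2; x i; i])), i_l.
  - intros h a a_l; apply in_map_iff in a_l as [i [<- i_l]]; apply semS_eq; auto.
Qed.

Lemma semS_compl a : exists c, (fun x => ~ semS a x) ≡ semScap c.
Proof.
  destruct (semS_cases a) as [[m [n ->]] | [[m [n ->]] | empty]].
  - exists (tup [tup [2; m; n]]); intro x.
    rewrite semScap_single, semS_neq, semS_eq; destruct (Pos.eq_dec (x n) m); tauto.
  - exists (tup [tup [1; m; n]]); intro x.
    rewrite semScap_single, semS_neq, semS_eq; tauto.
  - exists (tup []); intro x; rewrite semScap_tup; split; [easy|].
    intros _; apply empty.
Qed.

Definition A_codable (S : bset) : Prop := exists k, S ≡ semA k.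

Lemma A_codable_ext S T : S ≡ T -> A_codable S -> A_codable T.
Proof. intros ST [k hk]; exists k; intro x; rewrite <- ST; apply hk. Qed.

Lemma A_codable_empty : A_codable (fun _ => False).
Proof. exists (tup []); intro x; rewrite semA_tup; firstorder. Qed.

Lemma A_codable_full : A_codable (fun _ => True).
Proof.
  exists (tup [tup []]); intro x; rewrite semA_single, semScap_tup; firstorder.
Qed.

Lemma A_codable_semScap k : A_codable (semScap k).
Proof. exists (tup [k]); intro x; now rewrite semA_single. Qed.

Lemma A_codable_compl_semScap a : A_codable (fun x => ~ semScap a x).
Proof.
  destruct (classic (exists l, a = tup l)) as [[l ->] | not_tup].
  - destruct (choice (fun b c => (fun x => ~ semS b x) ≡ semScap c) semS_compl)
      as [N hN].
    exists (tup (map N l)); intro x; rewrite semA_tup, semScap_tup; split.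
    + intro h; apply not_all_ex_not in h as [b h]; apply imply_to_and in h as [b_l h].
      exists (N b); split; [apply in_map | apply hN]; auto.
    + intros [c [c_l h]] hall; apply in_map_iff in c_l as [b [<- b_l]].
      apply hN in h; auto.
  - apply (A_codable_ext (fun _ => True)); [|exact A_codable_full].
    intro x; split; [|easy]; intros _ [l [e _]]; eauto.
Qed.

Lemma A_codable_and (P : Prop) S : A_codable S -> A_codable (fun x => P /\ S x).
Proof.
  intro hS; destruct (classic P) as [p | np].
  - apply (A_codable_ext S); [|exact hS]; tauto.
  - apply (A_codable_ext (fun _ => False)); [|exact A_codable_empty]; tauto.
Qed.

Lemma A_codable_impl (P : Prop) S : A_codable S -> A_codable (fun x => P -> S x).
Proof.
  intro hS; destruct (classic P) as [p | np].
  - apply (A_codable_ext S); [|exact hS]; tauto.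
  - apply (A_codable_ext (fun _ => True)); [|exact A_codable_full]; tauto.
Qed.

Record code := Code {
  code_stp : baire;
  code_tree : stump code_stp;
  code_label : baire
}.

Definition Pi_of (c : code) : bset := fst (semPS _ (code_tree c) (code_label c)).
Definition Sigma_of (c : code) : bset := snd (semPS _ (code_tree c) (code_label c)).

Definition Pi_rep (S : bset) : Prop := exists c, S ≡ Pi_of c.
Definition Sigma_rep (S : bset) : Prop := exists c, S ≡ Sigma_of c.

Lemma Pi_rep_ext S T : S ≡ T -> Pi_rep S -> Pi_rep T.
Proof. intros ST [c hc]; exists c; intro x; rewrite <- ST; apply hc. Qed.

Lemma Sigma_rep_ext S T : S ≡ T -> Sigma_rep S -> Sigma_rep T.
Proof. intros ST [c hc]; exists c; intro x; rewrite <- ST; apply hc. Qed.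

Definition leaf_code (k : positive) : code :=
  Code (fun _ => 2) (stump_leaf pair (fun _ => 2) ltac:(discriminate)) (fun _ => k).

Lemma Pi_of_leaf k : Pi_of (leaf_code k) ≡ semA k.
Proof. intro x; split; [intro h; exact (h 2 ltac:(discriminate)) | intros h n _; exact h]. Qed.

Lemma Sigma_of_leaf k : Sigma_of (leaf_code k) ≡ semA k.
Proof.
  intro x; split; [now intros [n [_ h]] | intro h; exists 2; split; [discriminate | exact h]].
Qed.

Lemma Pi_rep_of_A_codable S : A_codable S -> Pi_rep S.
Proof. intros [k hk]; exists (leaf_code k); intro x; now rewrite hk, Pi_of_leaf. Qed.

Lemma Sigma_rep_of_A_codable S : A_codable S -> Sigma_rep S.
Proof. intros [k hk]; exists (leaf_code k); intro x; now rewrite hk, Sigma_of_leaf. Qed.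

(* Left inverse of [pair]; its values off the range of [pair] are irrelevant. *)
Definition unpair (k : positive) : positive * positive :=
  epsilon (inhabits (1, 1)) (fun ab => pair (fst ab) (snd ab) = k).

Lemma unpair_pair a b : unpair (pair a b) = (a, b).
Proof.
  unfold unpair.
  pose proof (epsilon_spec (inhabits (1, 1)) (fun ab => pair (fst ab) (snd ab) = pair a b)
                (ex_intro _ (a, b) eq_refl)) as spec.
  destruct (epsilon _ _) as [a' b']; simpl in spec.
  now destruct (pair_inj _ _ _ _ spec) as [-> ->].
Qed.

Definition glue (F : positive -> baire) : baire :=
  fun k => if k =? 1 then 1 else F (fst (unpair k)) (snd (unpair k)).

Lemma sect_glue F n : sect pair (glue F) n = F n.
Proof.
  apply functional_extensionality; intro m; unfold sect, glue.
  destruct (Pos.eqb_spec (pair n m) 1) as [e | _]; [now destruct (pair_ne1 n m)|].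
  now rewrite unpair_pair.
Qed.

Lemma semPS_eq_rect_r f1 f0 (e : f1 = f0) (p : stump f0) g :
  semPS f1 (eq_rect_r stump p e) g = semPS f0 p g.
Proof. now subst. Qed.

Definition node_code (C : positive -> code) : code :=
  Code (glue (fun n => code_stp (C n)))
       (stump_node pair _ eq_refl
          (fun n => eq_rect_r stump (code_tree (C n)) (sect_glue _ n)))
       (glue (fun n => code_label (C n))).

Lemma semPS_glue_child F (p : forall n, stump (F n)) G n :
  semPS _ (eq_rect_r stump (p n) (sect_glue F n)) (sect pair (glue G) n) = semPS _ (p n) (G n).
Proof. now rewrite semPS_eq_rect_r, sect_glue. Qed.

Lemma Pi_of_node C : Pi_of (node_code C) ≡ fun x => forall n, Sigma_of (C n) x.
Proof.
  pose proof (semPS_glue_child (fun n => code_stp (C n)) (fun n => code_tree (C n))) as child.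
  intro x; unfold Pi_of, Sigma_of, node_code; cbn [code_tree code_label semPS fst snd].
  split; intros h n; specialize (h n); now rewrite child in *.
Qed.

Lemma Sigma_of_node C : Sigma_of (node_code C) ≡ fun x => exists n, Pi_of (C n) x.
Proof.
  pose proof (semPS_glue_child (fun n => code_stp (C n)) (fun n => code_tree (C n))) as child.
  intro x; unfold Pi_of, Sigma_of, node_code; cbn [code_tree code_label semPS fst snd].
  split; intros [n h]; exists n; now rewrite child in *.
Qed.

Lemma Sigma_rep_Union (S : positive -> bset) :
  (forall n, Pi_rep (S n)) -> Sigma_rep (fun x => exists n, S n x).
Proof.
  intro hS; destruct (choice _ hS) as [C hC].
  exists (node_code C); intro x; rewrite Sigma_of_node.
  split; intros [n h]; exists n; now apply hC.
Qed.

Lemma Pi_rep_Inter (S : positive -> bset) :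
  (forall n, Sigma_rep (S n)) -> Pi_rep (fun x => forall n, S n x).
Proof.
  intro hS; destruct (choice _ hS) as [C hC].
  exists (node_code C); intro x; rewrite Pi_of_node.
  split; intros h n; now apply hC.
Qed.

Lemma Sigma_rep_of_Pi_rep S : Pi_rep S -> Sigma_rep S.
Proof.
  intro hS; apply (Sigma_rep_ext (fun x => exists _ : positive, S x)).
  - intro x; split; [now intros [_ h] | now exists 1].
  - now apply Sigma_rep_Union.
Qed.

Lemma Pi_rep_of_Sigma_rep S : Sigma_rep S -> Pi_rep S.
Proof.
  intro hS; apply (Pi_rep_ext (fun x => forall _ : positive, S x)).
  - intro x; split; [exact (fun h => h 1) | auto].
  - now apply Pi_rep_Inter.
Qed.

Lemma Pi_rep_compl_semA k : Pi_rep (fun x => ~ semA k x).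
Proof.
  destruct (classic (exists l, k = tup l)) as [[l ->] | not_tup].
  - apply (Pi_rep_ext (fun x => forall a, In a l -> ~ semScap a x)).
    + intro x; rewrite semA_tup; firstorder.
    + apply Pi_rep_Inter; intro a.
      apply Sigma_rep_of_A_codable, A_codable_impl, A_codable_compl_semScap.
  - apply Pi_rep_of_A_codable, (A_codable_ext (fun _ => True)); [|exact A_codable_full].
    intro x; split; [|easy]; intros _ [l [e _]]; eauto.
Qed.

Lemma semPS_compl_rep f (p : stump f) : forall g,
  Sigma_rep (fun x => ~ fst (semPS f p g) x) /\ Pi_rep (fun x => ~ snd (semPS f p g) x).
Proof.
  induction p as [f f1 | f f1 children IH]; intro g; simpl; split.
  - apply (Sigma_rep_ext (fun x => exists n, ~ semA (g (Pos.succ n)) x)).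
    + intro x; rewrite all_ne1_iff; split.
      * intros [n h] hall; exact (h (hall n)).
      * intro h; now apply not_all_ex_not.
    + apply Sigma_rep_Union; intro n; apply Pi_rep_compl_semA.
  - apply (Pi_rep_ext (fun x => forall n, ~ semA (g (Pos.succ n)) x)).
    + intro x; rewrite ex_ne1_iff; split; [intros h [n hn]; exact (h n hn) | eauto].
    + apply Pi_rep_Inter; intro n; apply Sigma_rep_of_Pi_rep, Pi_rep_compl_semA.
  - apply (Sigma_rep_ext (fun x => exists n, ~ snd (semPS _ (children n) (sect pair g n)) x)).
    + intro x; split.
      * intros [n h] hall; exact (h (hall n)).
      * intro h; now apply not_all_ex_not.
    + apply Sigma_rep_Union; intro n; apply IH.
  - apply (Pi_rep_ext (fun x => forall n, ~ fst (semPS _ (children n) (sect pair g n)) x)).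
    + intro x; firstorder.
    + apply Pi_rep_Inter; intro n; apply IH.
Qed.

Lemma Sigma_rep_open U : baire_open U -> Sigma_rep U.
Proof.
  intro U_open.
  apply (Sigma_rep_ext (fun x => exists k, (forall y, semScap k y -> U y) /\ semScap k x)).
  - intro x; split; [now intros [k [kU h]]; apply kU|].
    intro Ux; destruct (U_open x Ux) as [l hl].
    exists (tup (map (fun i => tup [2; x i; i]) l)); split.
    + intros y hy; apply hl, semScap_nbhd, hy.
    + now apply semScap_nbhd.
  - apply Sigma_rep_Union; intro k.
    apply Pi_rep_of_A_codable, A_codable_and, A_codable_semScap.
Qed.

Lemma Sigma_rep_borel A : borel A -> Sigma_rep A.
Proof.
  induction 1 as [U U_open | A _ [c hc] | A _ IH].
  - now apply Sigma_rep_open.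
  - apply Sigma_rep_of_Pi_rep, (Pi_rep_ext (fun x => ~ Sigma_of c x)).
    + intro x; now rewrite hc.
    + apply semPS_compl_rep.
  - apply (Sigma_rep_ext (fun x => exists n, A (Nat.pred (Pos.to_nat n)) x)).
    + intro x; symmetry; apply ex_nat_iff_ex_pos.
    + apply Sigma_rep_Union; intro n; apply Pi_rep_of_Sigma_rep, IH.
Qed.

End Representation.

Theorem proposition5p19
  (pair : positive -> positive -> positive)
  (pair_ne1 : forall a b, pair a b <> 1)
  (pair_inj : forall a b c d, pair a b = pair c d -> a = c /\ b = d)
  (pair_surj : forall k, k <> 1 -> exists a b, pair a b = k)
  (A : bset) (hA : borel A) :
  exists (g f : baire) (p : stump pair f),
    forall x, A x <-> semB pair f p g x.
Proof.
  destruct (Pi_rep_of_Sigma_rep pair pair_ne1 pair_inj A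
              (Sigma_rep_borel pair pair_ne1 pair_inj A hA)) as [c hc].
  (* The glued code has label 1 at 1, so [semB] reads it as a Sigma code. *)
  set (C := node_code pair pair_ne1 pair_inj (fun _ => c)).
  exists (code_label pair C), (code_stp pair C), (code_tree pair C).
  intro x; unfold semB; simpl.
  rewrite (Sigma_of_node pair pair_ne1 pair_inj (fun _ => c) x), hc.
  split; [now exists 1 | now intros [_ h]].
Qed.
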